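(* Let $1\le l\le r$ and consider a canonical noiseless MMV model $B=AX$ in which $A$ satisfies $0\le\delta^L_{2k-r+l}(A)<1$ and the nonzero rows of $X$ are in general position. Let $I\subset\{1,\dots,n\}$ satisfy $|I|\le\min(2(k-r)+l,\,k)$, $|I\setminus\operatorname{supp}X|\le k-r+l$ and $|I\cap\operatorname{supp}X|\ge k-r+1$. Then for every $j\in I$, the following are equivalent: (a) $j\in\operatorname{supp}X$; (b) $\operatorname{rank}[A_{I\setminus\{j\}}~B]=\operatorname{rank}[A_I~B]$; (c) $\mathbf a_j^{*}P^\perp_{R([A_{I\setminus\{j\}}~B])}\mathbf a_j=0$.
   Context: Canonical MMV setting: $m,n,r,k$ are positive integers with $r\le m<n$ and $r\le k$. $A\in\mathbb{R}^{m\times n}$ is the sensing matrix with columns $\mathbf a_1,\dots,\mathbf a_n$; $X\in\mathbb{R}^{n\times r}$ has rows $\mathbf x^1,\dots,\mathbf x^n$, $\operatorname{supp}X=\{i:\mathbf x^i\neq 0\}$ and $|\operatorname{supp}X|=k$; $B=AX\in\mathbb{R}^{m\times r}$ has full column rank $r$. For an index set $I$, $A_I$ is the submatrix of $A$ formed by the columns indexed by $I$, and $[A_I~B]$ denotes horizontal concatenation. $R(M)$ is the column space of $M$, $P_{R(M)}$ the orthogonal projection onto it, and $P^\perp_{R(M)}=\mathrm{Id}-P_{R(M)}$; $^*$ denotes transpose. The lower restricted isometry constant $\delta^L_s(A)$ is the smallest $\delta\ge0$ such that $(1-\delta)\|\mathbf x\|_2^2\le\|A\mathbf x\|_2^2$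 for all $\mathbf x$ with at most $s$ nonzero entries. ''The nonzero rows of $X$ are in general position'' means any $r$ of the $k$ nonzero rows of $X$ are linearly independent. *)

From HB Require Import structures.
From mathcomp Require Import all_boot all_order all_algebra.
Set Implicit Arguments. Unset Strict Implicit. Unset Printing Implicit Defensive.
Import Order.TTheory GRing.Theory Num.Theory.
Local Open Scope ring_scope.

Section Defs.
Variable R : rcfType.

Definition sqnorm {p : nat} (x : 'cV[R]_p) : R := \sum_i x i 0 ^+ 2.

Definition sparse {p : nat} (s : nat) (x : 'cV[R]_p) : bool :=
  (#|[set i | x i ord0 != 0%R]| <= s)%N.

Definition lower_RIP_ok {m n : nat} (s : nat) (A : 'M[R]_(m, n)) (d : R) : Prop :=
  forall x : 'cV[R]_n, sparse s x -> (1 - d) * sqnorm x <= sqnorm (A *m x).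

Definition is_lower_RIC {m n : nat} (s : nat) (A : 'M[R]_(m, n)) (d : R) : Prop :=
  0 <= d /\ lower_RIP_ok s A d /\
  (forall d', 0 <= d' -> lower_RIP_ok s A d' -> d <= d').

Definition rsupp {n r : nat} (X : 'M[R]_(n, r)) : {set 'I_n} :=
  [set i | row i X != 0].

Definition colsubset {m n : nat} (A : 'M[R]_(m, n)) (I : {set 'I_n}) : 'M[R]_(m, #|I|) :=
  colsub (@enum_val _ (mem I)) A.

Definition rowsubset {n r : nat} (X : 'M[R]_(n, r)) (S : {set 'I_n}) : 'M[R]_(#|S|, r) :=
  rowsub (@enum_val _ (mem S)) X.

Definition rows_general_position {n r : nat} (X : 'M[R]_(n, r)) : Prop :=
  forall S : {set 'I_n}, S \subset rsupp X -> #|S| = r -> row_free (rowsubset X S).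

(* orthogonal projection onto the column space R(M):
   with C a matrix whose rows form a basis of R(M), P = C^T (C C^T)^{-1} C *)
Definition colspace_proj {m p : nat} (M : 'M[R]_(m, p)) : 'M[R]_m :=
  let C := row_base (M^T) in C^T *m invmx (C *m C^T) *m C.

Definition colspace_proj_perp {m p : nat} (M : 'M[R]_(m, p)) : 'M[R]_m :=
  1%:M - colspace_proj M.

End Defs.

(* Write S = supp X, J = I \ {j} and M_J = [A_J B].  All three conditions are
   shown equivalent to the single membership  a_j \in R(M_J):
   - (c): for a matrix C with independent rows and P = C^T (C C^T)^-1 C, the
     quadratic form v^T (1 - P) v is the squared norm of (1 - P) v, which
     vanishes iff v lies in the row space of C ([proj_perp_quad_eq0]).
   - (b): R(M_I) = R(M_J) + span a_j ([colspace_AB_setD1]), so the ranks agree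
     iff a_j already lies in R(M_J) ([rank_AB_setD1]).
   - (a) => membership: by general position, for j \in S the unit vector e_j
     agrees on r rows of S with some X c, and these r rows can be chosen to
     cover S \ (I \cap S \ {j}); then e_j - X c is supported in J and
     a_j = A (e_j - X c) + B c ([supp_col_in_span]).
   - membership => (a): if j \notin S and a_j = A y + B c with supp y in J,
     then z = e_j - y - X c is a nonzero, (2k - r + l)-sparse vector with
     A z = 0, contradicting the lower RIP with constant < 1
     ([offsupp_col_notin_span]).
   Membership in a column space R(M) is expressed as  v^T <= M^T  in the
   row-space algebra of mxalgebra. *)

From HB Require Import structures.
From mathcomp Require Import all_boot all_order all_algebra zify.
Set Implicit Arguments. Unset Strict Implicit. Unset Printing Implicit Defensive.
Import Order.TTheory GRing.Theory Num.Theory.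
Local Open Scope ring_scope.

Section SquaredNorm.
Variable R : rcfType.

Lemma sqnorm_trmx (p : nat) (v : 'cV[R]_p) : (v^T *m v) 0 0 = sqnorm v.
Proof. by rewrite !mxE; apply: eq_bigr => i _; rewrite !mxE expr2. Qed.

Lemma sqnorm_ge0 (p : nat) (v : 'cV[R]_p) : 0 <= sqnorm v.
Proof. by apply: sumr_ge0 => i _; apply: sqr_ge0. Qed.

Lemma sqnorm_eq0 (p : nat) (v : 'cV[R]_p) : (sqnorm v == 0) = (v == 0).
Proof.
apply/idP/eqP => [/eqP v0|->]; last first.
  by rewrite /sqnorm big1 // => i _; rewrite mxE expr0n.
apply/matrixP => i j; rewrite (ord1 j) mxE.
have /(_ i isT)/eqP := psumr_eq0P (fun i _ => sqr_ge0 (v i 0)) v0.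
by rewrite sqrf_eq0 => /eqP.
Qed.

End SquaredNorm.

Section OrthogonalProjection.
Variables (R : rcfType) (p m : nat) (C : 'M[R]_(p, m)).
Hypothesis C_free : row_free C.

Let G := C *m C^T.
Let P := C^T *m invmx G *m C.

(* The Gram matrix of independent rows is invertible: u G u^T = |u C|^2. *)
Lemma gram_unit : G \in unitmx.
Proof.
rewrite -row_free_unit; apply: inj_row_free => u uG0.
have : sqnorm (u *m C)^T == 0.
  by rewrite -sqnorm_trmx trmxK trmx_mul !mulmxA -(mulmxA u) uG0 !mul0mx mxE.
by rewrite sqnorm_eq0 trmx_eq0 mulmx_free_eq0 // => /eqP.
Qed.

Lemma proj_sym : P^T = P.
Proof. by rewrite /P !trmx_mul trmxK trmx_inv /G trmx_mul trmxK mulmxA. Qed.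

Lemma proj_idem : P *m P = P.
Proof. by rewrite /P !mulmxA -(mulmxA _ C) mulmxKV // gram_unit. Qed.

Lemma proj_fixP (u : 'rV[R]_m) : (u *m P == u) = (u <= C)%MS.
Proof.
apply/eqP/idP => [<-|/submxP[w ->]]; first by rewrite /P mulmxA submxMl.
by rewrite /P !mulmxA -(mulmxA w C) mulmxK // gram_unit.
Qed.

(* Since 1 - P is a symmetric idempotent, v^T (1 - P) v = |(1 - P) v|^2. *)
Lemma proj_perp_quad_eq0 (v : 'cV[R]_m) :
  ((v^T *m (1%:M - P) *m v) 0 0 == 0) = (v^T <= C)%MS.
Proof.
set Q := 1%:M - P.
have Q_sym : Q^T = Q by rewrite /Q linearB /= trmx1 proj_sym.
have Q_idem : Q^T *m Q = Q.
  by rewrite Q_sym /Q mulmxBl !mulmxBr !mul1mx mulmx1 proj_idem subrr subr0.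
rewrite -{1}Q_idem !mulmxA -mulmxA -trmx_mul sqnorm_trmx sqnorm_eq0.
rewrite -proj_fixP -trmx_eq0 /Q mulmxBl mul1mx linearB /= trmx_mul proj_sym.
by rewrite subr_eq0 eq_sym.
Qed.

End OrthogonalProjection.

Section ColumnSpaces.
Variable R : rcfType.

Lemma colspace_proj_perp_quad_eq0 (m p : nat) (M : 'M[R]_(m, p)) (v : 'cV[R]_m) :
  ((v^T *m colspace_proj_perp M *m v) 0 0 == 0) = (v^T <= M^T)%MS.
Proof. by rewrite proj_perp_quad_eq0 ?row_base_free // eq_row_base. Qed.

Lemma colspaceP (m p : nat) (M : 'M[R]_(m, p)) (v : 'cV[R]_m) :
  reflect (exists c, v = M *m c) (v^T <= M^T)%MS.
Proof.
apply: (iffP submxP) => [[w vw]|[c ->]]; last by exists c^T; rewrite trmx_mul.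
by exists w^T; apply: trmx_inj; rewrite trmx_mul trmxK.
Qed.

Lemma colspace_subP (m p q : nat) (M : 'M[R]_(m, p)) (W : 'M[R]_(q, m)) :
  (forall v : 'cV[R]_m, (v^T <= M^T)%MS -> (v^T <= W)%MS) -> (M^T <= W)%MS.
Proof. by move=> MW; apply/row_subP => i; rewrite -tr_col MW // tr_col row_sub. Qed.

Lemma rank_adds_eq (p q n : nat) (U : 'M[R]_(p, n)) (W : 'M[R]_(q, n)) :
  (\rank (U + W)%MS == \rank U) = (W <= U)%MS.
Proof.
have [_ rankE] := mxrank_leqif_sup (addsmxSl U W).
by rewrite eq_sym rankE addsmx_sub submx_refl.
Qed.

End ColumnSpaces.

Section VectorSupport.
Variable R : rcfType.

Definition vsupp (n : nat) (y : 'cV[R]_n) : {set 'I_n} := [set i | y i 0 != 0].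

Lemma vsuppPn (n : nat) (y : 'cV[R]_n) i : (i \notin vsupp y) = (y i 0 == 0).
Proof. by rewrite inE negbK. Qed.

Lemma vsupp_delta (n : nat) (j : 'I_n) : vsupp (delta_mx j 0) = [set j].
Proof.
apply/setP => i; rewrite !inE mxE eqxx andbT.
by case: (i == j); rewrite ?oner_eq0 ?eqxx.
Qed.

Lemma vsuppB (n : nat) (y z : 'cV[R]_n) : vsupp (y - z) \subset vsupp y :|: vsupp z.
Proof.
apply/subsetP => i; rewrite !inE !mxE; apply: contraR; rewrite negb_or !negbK.
by case/andP => /eqP-> /eqP->; rewrite subrr.
Qed.

Lemma vsupp_remove (n : nat) (y : 'cV[R]_n) (j : 'I_n) :
  vsupp (y - y j 0 *: delta_mx j 0) = vsupp y :\ j.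
Proof.
apply/setP => i; rewrite !inE !mxE.
by case: (eqVneq i j) => [->|ij]; rewrite ?eqxx ?mulr1 ?subrr ?eqxx //= mulr0 subr0.
Qed.

Lemma vsupp_mul_rsupp (n r : nat) (X : 'M[R]_(n, r)) (c : 'cV[R]_r) :
  vsupp (X *m c) \subset rsupp X.
Proof.
apply/subsetP => i; rewrite !inE; apply: contraR; rewrite negbK => /eqP Xi0.
by have := row_mul i X c; rewrite Xi0 mul0mx => /matrixP/(_ 0 0); rewrite !mxE => ->.
Qed.

Lemma colsubset_range (m n : nat) (A : 'M[R]_(m, n)) (J : {set 'I_n}) (v : 'cV[R]_m) :
  (exists w, v = colsubset A J *m w) <-> exists2 y, vsupp y \subset J & v = A *m y.
Proof.
set f := @enum_val _ (mem J).
have AJE : colsubset A J = A *m colsub f 1%:M by rewrite mulmx_colsub mulmx1.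
have f_notin t i : i \notin J -> (i == f t) = false.
  by move=> iJ; apply/eqP => ift; move: (enum_valP t); rewrite -/f -ift (negbTE iJ).
rewrite AJE; split=> [[w ->]|[y yJ ->]].
  exists (colsub f 1%:M *m w); last by rewrite mulmxA.
  apply/subsetP => i; rewrite inE; apply: contraR => iJ; rewrite mxE big1 // => t _.
  by rewrite !mxE f_notin // mul0r.
exists (\col_t y (f t) 0); rewrite -mulmxA; congr (_ *m _).
apply/matrixP => i z; rewrite (ord1 z) mxE.
have [iJ|iJ] := boolP (i \in J); last first.
  rewrite big1 => [|t _]; last by rewrite !mxE f_notin // mul0r.
  by have := contra (subsetP yJ i) iJ; rewrite inE negbK => /eqP ->.
rewrite (bigD1 (enum_rank_in iJ i)) //= big1 ?addr0.
  by rewrite !mxE /f enum_rankK_in // eqxx mul1r.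
move=> t ti; rewrite !mxE; case: eqP => [fti|]; last by rewrite mul0r.
by case/eqP: ti; apply: enum_val_inj; rewrite enum_rankK_in.
Qed.

End VectorSupport.

Section SpanAJB.
Variables (R : rcfType) (m n q : nat) (A : 'M[R]_(m, n)) (B : 'M[R]_(m, q)).

Lemma colspace_AB_P (J : {set 'I_n}) (v : 'cV[R]_m) :
  reflect (exists y c, vsupp y \subset J /\ v = A *m y + B *m c)
          (v^T <= (row_mx (colsubset A J) B)^T)%MS.
Proof.
apply: (iffP (colspaceP _ _)) => [[c0 ->]|[y [c [yJ ->]]]].
  have [|y yJ AJy] := (colsubset_range A J (colsubset A J *m usubmx c0)).1.
    by exists (usubmx c0).
  by rewrite -[c0]vsubmxK mul_row_col AJy; exists y, (dsubmx c0).
have [|w ->] := (colsubset_range A J (A *m y)).2; first by exists y.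
by exists (col_mx w c); rewrite mul_row_col.
Qed.

Lemma colspace_AB_setD1 (I : {set 'I_n}) (j : 'I_n) : j \in I ->
  ((row_mx (colsubset A I) B)^T
     == (row_mx (colsubset A (I :\ j)) B)^T + (col j A)^T)%MS.
Proof.
move=> jI; apply/andP; split.
  apply: colspace_subP => v /colspace_AB_P[y [c [yI ->]]].
  rewrite -(subrK (y j 0 *: delta_mx j 0) y) mulmxDr addrAC linearD /=.
  apply: addmx_sub_adds.
    apply/colspace_AB_P; exists (y - y j 0 *: delta_mx j 0), c.
    by rewrite vsupp_remove setSD.
  by rewrite -scalemxAr -colE linearZ /= scalemx_sub.
rewrite addsmx_sub; apply/andP; split.
  apply: colspace_subP => v /colspace_AB_P[y [c [yJ ->]]].
  by apply/colspace_AB_P; exists y, c; rewrite (subset_trans yJ) ?subD1set.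
apply/colspace_AB_P; exists (delta_mx j 0), 0.
by rewrite vsupp_delta sub1set jI mulmx0 addr0 colE.
Qed.

Lemma rank_AB_setD1 (I : {set 'I_n}) (j : 'I_n) : j \in I ->
  (\rank (row_mx (colsubset A (I :\ j)) B) = \rank (row_mx (colsubset A I) B))
  <-> ((col j A)^T <= (row_mx (colsubset A (I :\ j)) B)^T)%MS.
Proof.
move=> /colspace_AB_setD1/eqmxP splitI.
rewrite -!(mxrank_tr (row_mx _ B)) splitI -rank_adds_eq eq_sym.
by split=> [->|/eqP].
Qed.

End SpanAJB.

Lemma extend_set (T : finType) (A B : {set T}) (p : nat) :
  A \subset B -> (#|A| <= p <= #|B|)%N ->
  exists C : {set T}, [/\ A \subset C, C \subset B & #|C| = p].
Proof.
move=> sAB; elim: p => [|p IH] /andP[leAp lepB].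
  by exists A; split=> //; apply/eqP; rewrite -leqn0.
have [ltAp|geAp] := ltnP #|A| p.+1; last by exists A; split=> //; lia.
have [C [sAC sCB cardC]] := IH (ltac:(lia) : (#|A| <= p <= #|B|)%N).
have [x xB xC] : exists2 x, x \in B & x \notin C.
  by apply/subsetPn; apply: contraTN lepB => /subset_leq_card; rewrite cardC; lia.
exists (x |: C); split; last by rewrite cardsU1 xC cardC.
  exact: subset_trans sAC (subsetUr _ _).
by rewrite subUset sub1set xB.
Qed.

Section GeneralPosition.
Variable R : rcfType.

Lemma row_free_solve (p q : nat) (M : 'M[R]_(p, q)) (e : 'cV[R]_p) :
  row_free M -> exists c, M *m c = e.
Proof.
move=> freeM; have fullMT : row_full M^T by rewrite /row_full mxrank_tr.
have /submxP[w ew] := submx_full e^T fullMT.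
by exists w^T; apply: trmx_inj; rewrite trmx_mul trmxK ew.
Qed.

Variables (n r : nat) (X : 'M[R]_(n, r)).
Hypothesis X_gp : rows_general_position X.

Lemma gp_interpolate (S : {set 'I_n}) (t : 'cV[R]_n) :
  S \subset rsupp X -> #|S| = r ->
  exists c : 'cV[R]_r, {in S, forall i, (X *m c) i 0 = t i 0}.
Proof.
move=> SX cardS; set f := @enum_val _ (mem S).
have [c Xc] := row_free_solve (\col_u t (f u) 0) (X_gp SX cardS).
exists c => i iS; move/matrixP: Xc => /(_ (enum_rank_in iS i) 0).
by rewrite mul_rowsub_mx !mxE /f enum_rankK_in.
Qed.

(* If T misses at most r indices of supp X, then e_j - X c can be confined to T
   for j \in supp X \ T: match e_j on r rows covering supp X \ T. *)
Lemma gp_unit_decomp (T : {set 'I_n}) (j : 'I_n) :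
  j \in rsupp X -> j \notin T -> T \subset rsupp X ->
  (#|rsupp X :\: T| <= r <= #|rsupp X|)%N ->
  exists c : 'cV[R]_r, vsupp (delta_mx j 0 - X *m c) \subset T.
Proof.
move=> jX jT TX cardTX.
have [S [sXTS SX cardS]] := extend_set (subsetDl (rsupp X) T) cardTX.
have [c Xc] := gp_interpolate (delta_mx j 0) SX cardS.
have zE i : (delta_mx j 0 - X *m c) i 0 = (i == j)%:R - (X *m c) i 0.
  by rewrite !mxE eqxx andbT.
exists c; apply/subsetP => i; rewrite inE zE; apply: contraR => iT.
have [iS|iS] := boolP (i \in S); first by rewrite Xc // mxE eqxx andbT subrr.
have iX : i \notin rsupp X.
  by apply: contra iS => iX; apply: (subsetP sXTS); rewrite inE iX iT.
have ij : i != j by apply: contraNneq iX => ->.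
have := contra (subsetP (vsupp_mul_rsupp X c) i) iX.
by rewrite vsuppPn (negbTE ij) => /eqP->; rewrite subrr.
Qed.

Lemma supp_col_in_span (m : nat) (A : 'M[R]_(m, n)) (I : {set 'I_n}) (j : 'I_n) :
  j \in I -> j \in rsupp X -> (r <= #|rsupp X| < r + #|I :&: rsupp X|)%N ->
  ((col j A)^T <= (row_mx (colsubset A (I :\ j)) (A *m X))^T)%MS.
Proof.
move=> jI jX cardIX; set T := (I :&: rsupp X) :\ j.
have TX : T \subset rsupp X by rewrite (subset_trans (subD1set _ j)) ?subsetIr.
have cardT : #|I :&: rsupp X| = #|T| + 1.
  by rewrite (cardsD1 j (I :&: rsupp X)) inE jI jX addnC.
have [|c cT] := gp_unit_decomp jX (negbT (setD11 j _)) TX.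
  by rewrite cardsDS // -/T; lia.
apply/colspace_AB_P; exists (delta_mx j 0 - X *m c), c; split.
  by rewrite (subset_trans cT) ?setSD ?subsetIl.
by rewrite mulmxBr mulmxA subrK colE.
Qed.

End GeneralPosition.

Section LowerRIP.
Variables (R : rcfType) (m n : nat) (A : 'M[R]_(m, n)) (s : nat) (d : R).
Hypotheses (A_rip : lower_RIP_ok s A d) (d_lt1 : d < 1).

Lemma rip_kernel (z : 'cV[R]_n) : (#|vsupp z| <= s)%N -> A *m z = 0 -> z = 0.
Proof.
move=> sz Az0; have := A_rip sz; rewrite Az0.
have -> : sqnorm (0 : 'cV[R]_m) = 0 by apply/eqP; rewrite sqnorm_eq0.
rewrite pmulr_rle0 ?subr_gt0 // => z_le0.
by apply/eqP; rewrite -sqnorm_eq0 eq_le z_le0 sqnorm_ge0.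
Qed.

(* a_j \in R(M_(I \ j)) => (a): a column outside the support cannot lie in
   R([A_(I \ j) A X]), since a representation yields the sparse kernel vector
   e_j - y - X c. *)
Lemma offsupp_col_notin_span (r : nat) (X : 'M[R]_(n, r)) (I : {set 'I_n}) (j : 'I_n) :
  j \in I -> j \notin rsupp X -> (#|I :|: rsupp X| <= s)%N ->
  ~~ ((col j A)^T <= (row_mx (colsubset A (I :\ j)) (A *m X))^T)%MS.
Proof.
move=> jI jX cardIX; apply/negP => /colspace_AB_P[y [c [yJ ajE]]].
set z := delta_mx j 0 - y - X *m c.
have Az0 : A *m z = 0.
  by rewrite /z !mulmxBr -colE ajE mulmxA [A *m y + _]addrC addrK subrr.
have zI : vsupp z \subset I :|: rsupp X.
  apply: subset_trans (vsuppB _ _) _.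
  rewrite subUset (subset_trans (vsupp_mul_rsupp X c)) ?subsetUr // andbT.
  apply: subset_trans (vsuppB _ _) _; rewrite vsupp_delta subUset sub1set inE jI /=.
  exact: subset_trans yJ (subset_trans (subD1set I j) (subsetUl _ _)).
have zj : z j 0 = 1.
  have /eqP yj : y j 0 == 0.
    by rewrite -vsuppPn; apply: contraTN yJ => jy; apply/subsetPn; exists j; rewrite ?setD11.
  have /eqP Xcj : (X *m c) j 0 == 0.
    by rewrite -vsuppPn; apply: contra jX; apply: (subsetP (vsupp_mul_rsupp X c)).
  have -> : z j 0 = 1 - y j 0 - (X *m c) j 0 by rewrite /z !mxE !eqxx.
  by rewrite yj Xcj !subr0.
have /eqP := oner_neq0 R; rewrite -zj.
by rewrite (rip_kernel (leq_trans (subset_leq_card zI) cardIX) Az0) mxE.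
Qed.

End LowerRIP.

Theorem theorem3 (R : rcfType) (m n r k l : nat)
  (A : 'M[R]_(m, n)) (X : 'M[R]_(n, r)) (dL : R) (I : {set 'I_n})
  (h_rm : (r <= m)%N) (h_mn : (m < n)%N) (h_rk : (r <= k)%N)
  (h_l1 : (1 <= l)%N) (h_lr : (l <= r)%N)
  (h_k : #|rsupp X| = k)
  (h_B : \rank (A *m X) = r)
  (h_RIC : is_lower_RIC (2 * k - r + l) A dL) (h_dL : dL < 1)
  (h_gp : rows_general_position X)
  (h_I : (#|I| <= minn (2 * (k - r) + l) k)%N)
  (h_Iout : (#|I :\: rsupp X| <= k - r + l)%N)
  (h_Iin : (k - r + 1 <= #|I :&: rsupp X|)%N) :
  forall j : 'I_n, j \in I ->
    [<-> j \in rsupp X;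
         \rank (row_mx (colsubset A (I :\ j)) (A *m X))
           = \rank (row_mx (colsubset A I) (A *m X));
         ((col j A)^T *m colspace_proj_perp (row_mx (colsubset A (I :\ j)) (A *m X))
            *m col j A) 0 0 = 0].
Proof.
move=> j jI; set S := rsupp X in h_k h_Iout h_Iin *.
have supp_span : j \in S <->
    ((col j A)^T <= (row_mx (colsubset A (I :\ j)) (A *m X))^T)%MS.
  split=> [jS|].
    by apply: (supp_col_in_span h_gp A jI jS); rewrite -/S; lia.
  apply: contraTT => jS; apply: (offsupp_col_notin_span h_RIC.2.1 h_dL jI jS).
  rewrite -/S; have := cardsU I S; have := cardsD I S.
  by have := subset_leq_card (subsetIl I S); lia.
have rank_span := rank_AB_setD1 A (A *m X) jI.
split; first by move/supp_span/rank_span.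
split; first by move/rank_span; rewrite -colspace_proj_perp_quad_eq0 => /eqP.
by move/eqP; rewrite colspace_proj_perp_quad_eq0 => /supp_span.
Qed.
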